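(* Let $n \ge 2$ be an integer, $\lambda > 0$ a real number, $C \ge 1$ and $m$ a positive integer with $m \le n+1$. There exists a constant $C'>0$ depending only on $n$, $m$ and $C$ such that the following holds. Let $(p_0,\ldots,p_n) \in \mathbb{Z}^{n+1}$ with $q := p_0 \ge 1$, $C^{-1} q \le |p_i| \le C q$ for all $i$, and $|p_{i-1}p_{i+1} - p_i^2| \le C q^{1-\lambda}$ for all $i \in \{1,\ldots,n-1\}$. For $i = 0,\ldots,n-m+1$ let $\mathbf{y}_i = (p_i, p_{i+1}, \ldots, p_{i+m-1}) \in \mathbb{Z}^m$. Then for any integers $c_1,\ldots,c_m \in \{0,\ldots,n-m+1\}$, the determinant $d(c_1,\ldots,c_m)$ of the $m\times m$ matrix with rows $\mathbf{y}_{c_1},\ldots,\mathbf{y}_{c_m}$ satisfies $|d(c_1,\ldots,c_m)| \le C' q^{1-(m-1)\lambda}$.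
   Context: The paper writes these statements with Vinogradov notation ($\ll$, $\asymp$); here implied constants are made explicit. *)

From mathcomp Require Import all_boot all_order all_algebra.
From mathcomp Require Import all_classical all_reals all_analysis.
Import Order.TTheory GRing.Theory Num.Theory.
Local Open Scope ring_scope.

Definition ymat (p : nat -> int) {m N : nat} (c : 'I_m -> 'I_N) : 'M[int]_m :=
  \matrix_(k < m, j < m) p ((c k : nat) + (j : nat))%N.

From mathcomp Require Import all_boot all_order all_algebra.
From mathcomp Require Import all_classical all_reals all_analysis.
From mathcomp Require Import fingroup perm.
From mathcomp Require Import zify ring.
Import Order.TTheory GRing.Theory Num.Theory.
Local Open Scope ring_scope.

(* Write a_i = p_i and r = a_1 / a_0.  The consecutive ratios a_{t+1} / a_t
   move by at most O(q^(-1-lam)) per step, since their difference is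
   (a_t a_{t+2} - a_{t+1}^2) / (a_t a_{t+1}); hence a_{t+1} - r a_t = O(q^(-lam)).
   Subtracting r times column j-1 from column j (for j >= 1) does not change
   the determinant and leaves one column of size O(q) and m-1 columns of size
   O(q^(-lam)), so the Leibniz expansion gives |d| = O(q^(1-(m-1)lam)). *)

Lemma norm_det_le_col_bound (R : numDomainType) m (A : 'M[R]_m) (b : 'I_m -> R) :
  (forall i j, `|A i j| <= b j) -> `|\det A| <= m`!%:R * \prod_j b j.
Proof.
move=> A_le; rewrite /determinant.
apply: le_trans (ler_norm_sum _ _ _) _.
apply: le_trans (_ : \sum_(s : 'S_m) \prod_j b j <= _); last first.
  by rewrite sumr_const card_Sn mulr_natl.
apply: ler_sum => s _.
rewrite normrM normrX normrN normr1 expr1n mul1r normr_prod.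
rewrite (reindex_inj (@perm_inj _ s^-1)) /=.
by apply: ler_prod => i _; rewrite normr_ge0 permKV A_le.
Qed.

Lemma det_sub_scaled_prev_col (R : comPzRingType) m (g : 'I_m -> nat -> R) (r : R) :
  \det (\matrix_(k, j) (g k j - if j : nat is j'.+1 then r * g k j' else 0)) =
  \det (\matrix_(k, j) g k j).
Proof.
pose U : 'M[R]_m := \matrix_(i, j) ((i == j)%:R - r *+ (i.+1 == j :> nat)).
have detU : \det U = 1.
  rewrite -det_tr det_trig.
    by apply: big1 => i _; rewrite !mxE eqxx (gtn_eqF (ltnSn i)) subr0.
  apply/is_trig_mxP => i j lt_ij; rewrite !mxE.
  by rewrite (gtn_eqF lt_ij : (j == i) = false) (gtn_eqF (ltn_trans lt_ij (ltnSn j))) subr0.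
suff -> : \matrix_(k, j) (g k j - if j : nat is j'.+1 then r * g k j' else 0) =
          \matrix_(k, j) g k j *m U.
  by rewrite det_mulmx detU mulr1.
apply/matrixP => k j; rewrite !mxE.
under eq_bigr do rewrite !mxE mulrBr mulrnAr mulr1.
rewrite sumrB; congr (_ - _).
  by rewrite (bigD1 j) //= eqxx big1 ?addr0 // => i /negPf ->.
case: j => [[|j] lt_jm] /=; first by rewrite big1 // => i _; rewrite mulr0n mulr0.
rewrite (bigD1 (Ordinal (ltnW lt_jm))) //= eqxx mulrC big1 ?addr0 //.
move=> i ne_ij; rewrite eqSS (_ : (i == j :> nat) = false) ?mulr0n ?mulr0 //.
by apply: contraNF ne_ij => /eqP eq_ij; apply/eqP/val_inj.
Qed.

Lemma powR1B_natmul (R : realType) (x s : R) (k : nat) :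
  0 < x -> x `^ (1 - k%:R * s) = x * (x `^ (- s)) ^+ k.
Proof.
move=> x_gt0.
rewrite (_ : 1 - k%:R * s = 1 + - s * k%:R); last by ring.
rewrite powRD ?powRr1 ?(ltW x_gt0) ?powRrM ?powR_mulrn ?powR_ge0 //.
by apply/implyP => _; rewrite gt_eqF.
Qed.

Lemma det_ymat_eq0 (p : nat -> int) m N (c : 'I_m -> 'I_N) :
  (N < m)%N -> \det (ymat p c) = 0.
Proof.
move=> lt_Nm.
have /injectivePn[k1 [k2 ne_k12 eq_c]] : ~~ injectiveb c.
  by apply: contraL lt_Nm => /injectiveP/leq_card; rewrite !card_ord leqNgt.
by apply: (determinant_alternate ne_k12) => j; rewrite !mxE eq_c.
Qed.

Section NearlyGeometric.

Variables (R : realFieldType) (a : nat -> R) (n : nat) (lo hi D : R).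
Hypothesis lo_gt0 : 0 < lo.
Hypothesis D_ge0 : 0 <= D.
Hypothesis a_bounds : forall i, (i <= n)%N -> lo <= `|a i| <= hi.
Hypothesis a_defect : forall t, (t.+2 <= n)%N -> `|a t * a t.+2 - a t.+1 ^+ 2| <= D.

Let a_neq0 i : (i <= n)%N -> a i != 0.
Proof.
by move=> le_in; rewrite -normr_gt0 (lt_le_trans lo_gt0) //; case/andP: (a_bounds _ le_in).
Qed.

Lemma ratio_step t : (t.+2 <= n)%N ->
  `|a t.+2 / a t.+1 - a t.+1 / a t| <= D / lo ^+ 2.
Proof.
move=> le_tn.
have [at_neq0 at1_neq0] : a t != 0 /\ a t.+1 != 0 by split; apply: a_neq0; lia.
rewrite (_ : _ - _ = (a t * a t.+2 - a t.+1 ^+ 2) / (a t * a t.+1)); last first.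
  by field; rewrite at_neq0 at1_neq0.
have lo2_gt0 : 0 < lo ^+ 2 by rewrite exprn_gt0.
rewrite normrM normfV; apply: ler_pM; rewrite ?invr_ge0 //; first exact: a_defect.
rewrite lef_pV2 ?posrE ?normr_gt0 ?mulf_neq0 // normrM expr2.
have /andP[lo_at _] := a_bounds t (ltnW (ltnW le_tn)).
have /andP[lo_at1 _] := a_bounds t.+1 (ltnW le_tn).
by apply: ler_pM; rewrite // ltW.
Qed.

Lemma ratio_drift t : (t < n)%N ->
  `|a t.+1 / a t - a 1 / a 0| <= t%:R * (D / lo ^+ 2).
Proof.
elim: t => [|t IH] lt_tn; first by rewrite subrr normr0 mul0r.
rewrite -natr1 mulrDl mul1r.
rewrite (_ : _ - _ = (a t.+1 / a t - a 1 / a 0) + (a t.+2 / a t.+1 - a t.+1 / a t)).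
  by apply: le_trans (ler_normD _ _) _; apply: lerD; [apply: IH | apply: ratio_step]; lia.
by ring.
Qed.

Lemma geometric_defect t : (t < n)%N ->
  `|a t.+1 - a 1 / a 0 * a t| <= n%:R * (D / lo ^+ 2) * hi.
Proof.
move=> lt_tn.
have [at_neq0 a0_neq0] : a t != 0 /\ a 0 != 0 by split; apply: a_neq0; lia.
rewrite (_ : _ - _ = (a t.+1 / a t - a 1 / a 0) * a t); last by field; rewrite a0_neq0 at_neq0.
rewrite normrM; apply: ler_pM => //.
  apply: le_trans (ratio_drift t lt_tn) _.
  apply: ler_wpM2r; first by rewrite divr_ge0 // exprn_ge0 // ltW.
  by rewrite ler_nat ltnW.
by case/andP: (a_bounds _ (ltnW lt_tn)).
Qed.

Lemma det_hankel_rows_le m (c : 'I_m -> nat) : (0 < m)%N ->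
  (forall k, c k + m <= n.+1)%N ->
  `|\det (\matrix_(k, j) a (c k + j)%N)| <=
    m`!%:R * hi * (n%:R * (D / lo ^+ 2) * hi) ^+ m.-1.
Proof.
case: m c => // m c _ c_le.
rewrite -((@det_sub_scaled_prev_col _ _ (fun k t => a (c k + t)%N) (a 1 / a 0))) -mulrA.
pose b (j : 'I_m.+1) := if j == ord0 then hi else n%:R * (D / lo ^+ 2) * hi.
apply: le_trans (@norm_det_le_col_bound _ _ _ b _) _.
  move=> k [[|j] lt_jm]; have := c_le k; rewrite mxE /b /= => ck_le.
    rewrite subr0 addn0.
    by have /andP[] : lo <= `|a (c k)| <= hi by apply: a_bounds; lia.
  by rewrite addnS; apply: geometric_defect; lia.
by rewrite big_ord_recl /b eqxx /= prodr_const card_ord.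
Qed.

End NearlyGeometric.

Theorem proposition4p3 (R : realType) (n m : nat) (C : R) :
  (2 <= n)%N -> 1 <= C -> (0 < m)%N -> (m <= n.+1)%N ->
  exists C' : R, 0 < C' /\
  forall (lam : R) (p : nat -> int),
    0 < lam ->
    (1 <= p 0%N)%R ->
    (forall i : nat, (i <= n)%N ->
        C^-1 * (p 0%N)%:~R <= `|(p i)%:~R| :> R /\
        `|(p i)%:~R| <= C * (p 0%N)%:~R :> R) ->
    (forall i : nat, (1 <= i)%N -> (i <= n.-1)%N ->
        `|(p i.-1 * p i.+1 - p i ^+ 2)%:~R| <= C * ((p 0%N)%:~R `^ (1 - lam)) :> R) ->
    forall c : 'I_m -> 'I_(n - m + 2),
      `|(\det (ymat p c))%:~R| <= C' * ((p 0%N)%:~R `^ (1 - (m%:R - 1) * lam)) :> R.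
Proof.
move=> le2n C_ge1 m_gt0 le_m_n1.
have C_gt0 : 0 < C by apply: lt_le_trans C_ge1.
exists (m`!%:R * C * (n%:R * C ^+ 4) ^+ m.-1); split.
  by rewrite !mulr_gt0 ?exprn_gt0 ?mulr_gt0 ?exprn_gt0 ?ltr0n ?fact_gt0 //; lia.
move=> lam p lam_gt0 p0_ge1 p_bounds p_defect c.
set q : R := (p 0%N)%:~R.
have q_gt0 : 0 < q by rewrite (lt_le_trans ltr01) // ler1z.
(* For m = n+1 the truncated index bound n - m + 2 is 2, not 1, so c may pick
   the row y_1, which involves the unconstrained p_{n+1}; but then m > 2 rows
   are drawn from two, so two coincide. *)
have [le_mn | lt_nm] := leqP m n; last first.
  rewrite det_ymat_eq0 ?mulr0z ?normr0; last by lia.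
  by rewrite !mulr_ge0 ?exprn_ge0 ?mulr_ge0 ?powR_ge0 ?ler0n ?ltW.
have -> : (\det (ymat p c))%:~R = \det (\matrix_(k, j) (p (c k + j)%N)%:~R : 'M[R]_m).
  by rewrite -det_map_mx; congr (\det _); apply/matrixP => k j; rewrite !mxE.
apply: le_trans (@det_hankel_rows_le R (fun i => (p i)%:~R) n (C^-1 * q) (C * q)
  (C * q `^ (1 - lam)) _ _ _ _ m (fun k => c k) m_gt0 _) _.
- by rewrite mulr_gt0 ?invr_gt0.
- by rewrite mulr_ge0 ?powR_ge0 ?ltW.
- by move=> i /p_bounds[lo_le le_hi]; rewrite lo_le le_hi.
- move=> t le_t2n; have /= := p_defect t.+1 isT.
  by rewrite intrB !intrM; apply; lia.
- by move=> k; have := ltn_ord (c k); lia.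
have := @powR1B_natmul _ q lam 1 q_gt0; rewrite mul1r expr1 => ->.
have -> : m%:R - 1 = m.-1%:R :> R by rewrite -subn1 natrB.
rewrite powR1B_natmul //.
set dl := q `^ (- lam).
have -> : n%:R * (C * (q * dl) / (C^-1 * q) ^+ 2) * (C * q) = n%:R * C ^+ 4 * dl.
  by field; rewrite !gt_eqF.
by rewrite le_eqVlt !exprMn; apply/orP; left; apply/eqP; ring.
Qed.
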